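(* Let $G$ be a Nash equilibrium graph of the sum network creation game with $n$ players and $H\subseteq G$ a non-trivial $2$-edge-connected component, with $g(G)>14$. Then every $2$-path $\pi=u_0-u_1-\dots-u_k$ in $H$ with $k\ge 5$, oriented so that each $u_i$ ($0\le i<k$) has bought the link $(u_i,u_{i+1})$, satisfies $$D(u_5)-D(u_0)\ge 2n-(U_1+U_2+U_3+U_4).$$
   Context: Sum network creation game: players $V=\{1,\dots,n\}$, parameter $\alpha>0$; a strategy of $u$ is $s_u\subseteq V\setminus\{u\}$; $G_s$ has an edge $uv$ whenever $v\in s_u$ or $u\in s_v$, regarded as a digraph with arc $(u,v)$ when $v\in s_u$; the cost of $u$ is $\alpha|s_u|+\sum_{v\ne u}d_{G_s}(u,v)$. A Nash equilibrium graph is $G_s$ for $s$ from which no player can strictly lower his cost unilaterally. $D(u)=\sum_{v\ne u}d_G(u,v)$. A $2$-edge-connected component $H$ is a maximal bridgeless subgraph; non-trivial means at least $3$ vertices. For $u\in V(H)$, $T(u)$ is the connected component containing $u$ of the subgraph induced by $(V(G)\setminus V(H))\cup\{u\}$, and $U_i=|T(u_i)|$. A $2$-path in $H$ is a path $u_0-\dots-u_k$ in $H$ with $deg^-_H(u_i)=deg^+_H(u_i)=1$ for $0<i<k$ (degrees counted over arcs inside $H$). $g(G)$ denotes the girth of $G$. *)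

From mathcomp Require Import all_boot all_order all_algebra.
Set Implicit Arguments. Unset Strict Implicit. Unset Printing Implicit Defensive.
Import Order.TTheory GRing.Theory Num.Theory.

Section NCG.
Variable V : finType.

(* A strategy profile: s u is the set of vertices u buys links to. *)
Definition profile := {ffun V -> {set V}}.

Definition edge (s : profile) : rel V := fun x y => (y \in s x) || (x \in s y).

Definition ball (e : rel V) (k : nat) (u : V) : {set V} :=
  iter k (fun A => A :|: [set y | [exists x in A, e x y]]) [set u].

(* graph distance (least k with v in ball k u); only used when v is reachable *)
Definition dist (e : rel V) (u v : V) : nat :=
  find (fun k => v \in ball e k u) (iota 0 #|V|).

Definition Dsum (e : rel V) (u : V) : nat := \sum_(v | v != u) dist e u v.

Definition reaches_all (e : rel V) (u : V) : bool := [forall v, connect e u v].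

Definition cost (R : realFieldType) (alpha : R) (s : profile) (u : V) : R :=
  alpha * #|s u|%:R + (Dsum (edge s) u)%:R.

Definition upd (s : profile) (u : V) (t : {set V}) : profile :=
  [ffun w => if w == u then t else s w].

(* Nash equilibrium; cost is +infinity when u does not reach every vertex. *)
Definition nash (R : realFieldType) (alpha : R) (s : profile) : Prop :=
  (forall u, u \notin s u) /\
  forall (u : V) (t : {set V}), u \notin t ->
    reaches_all (edge (upd s u t)) u ->
    reaches_all (edge s) u /\ (cost alpha s u <= cost alpha (upd s u t) u)%R.

Definition remove_edge (e : rel V) (x y : V) : rel V :=
  fun a b => e a b && ~~ (((a == x) && (b == y)) || ((a == y) && (b == x))).

Definition nonbridge (e : rel V) : rel V :=
  fun x y => e x y && connect (remove_edge e x y) x y.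

Definition two_ecc (e : rel V) (H : {set V}) : Prop :=
  exists w, H = [set v | connect (nonbridge e) w v].

Definition restrict (e : rel V) (S : {set V}) : rel V :=
  fun x y => [&& e x y, x \in S & y \in S].

Definition Tset (e : rel V) (H : {set V}) (u : V) : {set V} :=
  [set v | connect (restrict e (~: H :|: [set u])) u v].

Definition outdegH (s : profile) (H : {set V}) (u : V) : nat := #|s u :&: H|.
Definition indegH (s : profile) (H : {set V}) (u : V) : nat :=
  #|[set v in H | u \in s v]|.

Definition girth_gt (e : rel V) (m : nat) : Prop :=
  forall L, 3 <= L <= m ->
    ~ exists c : seq V, [/\ size c = L, uniq c & cycle e c].

End NCG.

From mathcomp Require Import all_boot all_order all_algebra.
From mathcomp Require Import zify.
Import Order.TTheory GRing.Theory Num.Theory.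

(* For i < 4 let u_i trade its link to u_(i+1) for one to u_(i+2); since s is a
   Nash equilibrium, this does not decrease D(u_i).  Fix a vertex x and put
   a_m = d(u_m, x) for m <= 5.  Consecutive a_m differ by at most 1.  If x lies in
   the tree T(u_j) of an inner vertex, then a_m = a_j + |m - j|, because all paths
   from x to the 2-path pass through u_j and the girth bound makes u_0 ... u_5 a
   geodesic between its inner vertices; otherwise a has no local minimum at j, since
   a shortest path from x to u_j reaches u_j from a path neighbour.  Knowing which of
   the three routes u_i -> x, u_i -> u_(i+2) -> x and u_i -> u_(i+2) -> u_(i+1) -> x
   survives the deviation, a finite case analysis on the profile a gives
     2 * sum_(i < 4) d'_i(u_i, x) + 2 <= a_0 + 2 (a_1 + a_2 + a_3) + a_5 + #{j | x in T(u_j)}.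
   Summing over x and using D(u_i) <= D'_i(u_i) leaves D(u_0) + 2n <= D(u_5) + U_1 + ... + U_4. *)

Set Implicit Arguments.
Unset Strict Implicit.
Unset Printing Implicit Defensive.

Section Distance.
Variable V : finType.
Implicit Types (e : rel V) (r u v w x y : V).

Lemma ballS e k u :
  ball e k.+1 u = ball e k u :|: [set y | [exists x in ball e k u, e x y]].
Proof. by []. Qed.

Lemma mem_ballS e k u w x : w \in ball e k u -> e w x -> x \in ball e k.+1 u.
Proof.
by move=> Hw Hwx; rewrite ballS !inE; apply/orP; right; apply/existsP; exists w; rewrite Hw.
Qed.

Lemma ballSP e k u x :
  x \in ball e k.+1 u -> x \in ball e k u \/ exists2 w, w \in ball e k u & e w x.
Proof.
rewrite ballS !inE => /orP[|/existsP[w /andP[Hw Hwx]]]; first by left.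
by right; exists w.
Qed.

Lemma ball_mono e u k k' : k <= k' -> ball e k u \subset ball e k' u.
Proof.
move=> le_kk'; rewrite -(subnK le_kk'); elim: (k' - k) => [|d IH] //=.
by apply: subset_trans IH _; rewrite subsetUl.
Qed.

Lemma path_last_ball e u p : path e u p -> last u p \in ball e (size p) u.
Proof.
elim/last_ind: p => [|p y IH]; first by rewrite inE.
rewrite rcons_path last_rcons size_rcons => /andP[/IH Hp Hy].
exact: mem_ballS Hp Hy.
Qed.

Lemma connect_ball e u v : connect e u v -> v \in ball e #|V|.-1 u.
Proof.
case/connectP => p Hp ->; case/shortenP: Hp => p' Hp' Hu _.
have le_p' : size p' <= #|V|.-1.
  by have := max_card (mem (u :: p')); rewrite (card_uniqP Hu) /=; case: #|V|.
exact: subsetP (ball_mono _ _ le_p') _ (path_last_ball Hp').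
Qed.

Lemma dist_le e u v k : v \in ball e k u -> dist e u v <= k.
Proof.
move=> Hv; rewrite /dist; have [lt_kV | le_Vk] := ltnP k #|V|.
  rewrite leqNgt; apply/negP => /(before_find 0).
  by rewrite nth_iota // add0n Hv.
by apply: leq_trans (find_size _ _) _; rewrite size_iota.
Qed.

Lemma distxx e u : dist e u u = 0.
Proof. by apply/eqP; rewrite -leqn0; apply: dist_le; rewrite inE. Qed.

Lemma mem_ball_dist e u v : connect e u v -> v \in ball e (dist e u v) u.
Proof.
move=> /connect_ball Hv; have V_gt0 : 0 < #|V| by apply/card_gt0P; exists u.
have Hhas : has (fun k => v \in ball e k u) (iota 0 #|V|).
  by apply/hasP; exists #|V|.-1 => //; rewrite mem_iota /= add0n prednK.
have := nth_find 0 Hhas; rewrite nth_iota ?add0n //.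
by move: Hhas; rewrite has_find size_iota.
Qed.

Lemma DsumE e x : Dsum e x = \sum_v dist e x v.
Proof. by rewrite /Dsum [RHS](bigD1 x) //= distxx. Qed.

Definition connected e := forall u v, connect e u v.

Section Connected.
Variable e : rel V.
Hypothesis e_conn : connected e.

Lemma mem_ballE k u v : (v \in ball e k u) = (dist e u v <= k).
Proof.
apply/idP/idP => [|le_dk]; first exact: dist_le.
exact: subsetP (ball_mono _ _ le_dk) _ (mem_ball_dist (e_conn u v)).
Qed.

Lemma dist_eq0 u v : (dist e u v == 0) = (u == v).
Proof.
apply/eqP/eqP => [d0|<-]; last exact: distxx.
by have := mem_ball_dist (e_conn u v); rewrite d0 inE => /eqP.
Qed.

Lemma dist_edge u w x : e w x -> dist e u x <= (dist e u w).+1.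
Proof. by move=> Hwx; rewrite -mem_ballE; apply: mem_ballS Hwx; rewrite mem_ballE. Qed.

Lemma dist_pred u x k :
  dist e u x = k.+1 -> exists2 w, e w x & dist e u w = k.
Proof.
move=> dk; have := mem_ball_dist (e_conn u x); rewrite dk => /ballSP[].
  by rewrite mem_ballE dk ltnn.
move=> [w Hw Hwx]; exists w => //; apply/eqP; rewrite eqn_leq -mem_ballE Hw /=.
by rewrite -ltnS -dk dist_edge.
Qed.

Lemma dist_triangle u w x : dist e u x <= dist e u w + dist e w x.
Proof.
move dk : (dist e w x) => k; elim: k x dk => [|k IH] x dk.
  by move/eqP: dk; rewrite dist_eq0 addn0 => /eqP ->.
have [y Hyx dy] := dist_pred dk.
by apply: leq_trans (dist_edge u Hyx) _; rewrite addnS ltnS IH.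
Qed.

Lemma dist_adj v w x : e v w -> dist e v x <= (dist e w x).+1.
Proof.
move=> Hvw; apply: leq_trans (dist_triangle v w x) _.
by have := dist_edge v Hvw; rewrite distxx; lia.
Qed.

Lemma dist_cut (A : {set V}) h y x :
  (forall a b, e a b -> a \notin A -> b \in A -> b = h) ->
  y \notin A -> x \in A -> dist e y h + dist e h x <= dist e y x.
Proof.
move=> A_entry Hy; move dk : (dist e y x) => k; elim: k x dk => [|k IH] x dk Hx.
  by move/eqP: dk; rewrite dist_eq0 => /eqP yx; rewrite yx Hx in Hy.
have [xh|neq_xh] := eqVneq x h; first by rewrite xh distxx addn0 -xh dk.
have [w Hwx dw] := dist_pred dk.
have HwA : w \in A.
  by apply: contraTT neq_xh => HwA; rewrite negbK (A_entry _ _ Hwx HwA Hx).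
by have := IH w dw HwA; have := dist_edge h Hwx; lia.
Qed.

(* A geodesic from r to x through the edge ab would make x strictly closer to b. *)
Lemma dist_remove_edge (e' : rel V) a b r x :
  subrel (remove_edge e a b) e' -> r != b -> dist e r x <= dist e b x ->
  dist e' r x <= dist e r x.
Proof.
move=> sub_e' neq_rb le_db; apply: dist_le.
move dk : (dist e r x) le_db => k; elim: k x dk => [|k IH] y dk le_db.
  by move/eqP: dk; rewrite dist_eq0 => /eqP <-; rewrite inE.
have [w Hwy dw] := dist_pred dk.
have le_bw : k <= dist e b w by have := dist_edge b Hwy; lia.
apply: (mem_ballS (IH w dw le_bw)); apply: sub_e'; rewrite /remove_edge Hwy /=.
apply/negP => /orP[] /andP[/eqP wa /eqP yb]; rewrite {}wa {}yb in dk dw le_db Hwy.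
  by move: le_db; rewrite distxx.
have := dist_edge b Hwy; rewrite distxx.
by move: neq_rb; rewrite -dist_eq0 dw; lia.
Qed.

Hypothesis e_sym : symmetric e.

Lemma distC u v : dist e u v = dist e v u.
Proof.
suff le_dist x y : dist e x y <= dist e y x by apply/eqP; rewrite eqn_leq !le_dist.
move dk : (dist e y x) => k; elim: k x dk => [|k IH] x dk.
  by move/eqP: dk; rewrite dist_eq0 => /eqP ->; rewrite distxx.
have [w Hwx dw] := dist_pred dk.
have Hxw : e x w by rewrite e_sym.
by apply: leq_trans (dist_adj y Hxw) _; rewrite ltnS IH.
Qed.

End Connected.
End Distance.

Section Profile.
Variable a : nat -> nat.

Definition unit_steps := forall i, i < 5 -> a i <= (a i.+1).+1 /\ a i.+1 <= (a i).+1.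

Definition not_local_min j := a j.-1 < a j \/ a j.+1 < a j.

Definition vshaped_at j := forall m, m <= 5 -> a j + ((m - j) + (j - m)) <= a m.

Hypothesis a_steps : unit_steps.

Let steps := (a_steps (i := 0) isT, a_steps (i := 1) isT, a_steps (i := 2) isT,
              a_steps (i := 3) isT, a_steps (i := 4) isT).

Lemma no_local_min_rise : (forall j, 0 < j < 5 -> not_local_min j) ->
  a 0 = 0 -> 3 <= a 5 -> forall m, m <= 4 -> a m = m.
Proof.
move=> no_min; have [[[[S0 S1] S2] S3] S4] := steps.
have [[[O1 O2] O3] O4] := (no_min 1 isT, no_min 2 isT, no_min 3 isT, no_min 4 isT).
rewrite /not_local_min /= in O1 O2 O3 O4 => a0 a5 m.
by case: m => [|[|[|[|[|]]]]] //= _; lia.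
Qed.

Lemma no_local_min_fall : (forall j, 0 < j < 5 -> not_local_min j) ->
  a 5 = 0 -> 3 <= a 0 -> forall m, 0 < m <= 5 -> a m = 5 - m.
Proof.
move=> no_min; have [[[[S0 S1] S2] S3] S4] := steps.
have [[[O1 O2] O3] O4] := (no_min 1 isT, no_min 2 isT, no_min 3 isT, no_min 4 isT).
rewrite /not_local_min /= in O1 O2 O3 O4 => a0 a5 m.
by case: m => [|[|[|[|[|[|]]]]]] //= _; lia.
Qed.

Variable b : nat -> nat.
Hypothesis b_bounds : forall i, i < 4 ->
  [/\ a i <= a i.+1 -> b i <= a i,
      a i.+2 <= a i.+1 -> b i <= (a i.+2).+1
    & a i.+1 < a i -> b i <= (a i.+1).+2].

Let bounds := (b_bounds (i := 0) isT, b_bounds (i := 1) isT,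
               b_bounds (i := 2) isT, b_bounds (i := 3) isT).

Lemma vshaped_profile_ineq j : 0 < j < 5 -> vshaped_at j ->
  2 * (b 0 + b 1 + b 2 + b 3) + 1 <= a 0 + 2 * (a 1 + a 2 + a 3) + a 5.
Proof.
move=> hj V; have [[[[S0 S1] S2] S3] S4] := steps.
have [[[[B00 B01 B02] [B10 B11 B12]] [B20 B21 B22]] [B30 B31 B32]] := bounds.
have [[[[[V0 V1] V2] V3] V4] V5] := (V 0 isT, V 1 isT, V 2 isT, V 3 isT, V 4 isT, V 5 isT).
by case: j hj {V} V0 V1 V2 V3 V4 V5 => [|[|[|[|[|[]]]]]] //= _; lia.
Qed.

Lemma no_local_min_profile_ineq : (forall j, 0 < j < 5 -> not_local_min j) ->
  2 * (b 0 + b 1 + b 2 + b 3) + 2 <= a 0 + 2 * (a 1 + a 2 + a 3) + a 5.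
Proof.
move=> no_min; have [[[[S0 S1] S2] S3] S4] := steps.
have [[[[B00 B01 B02] [B10 B11 B12]] [B20 B21 B22]] [B30 B31 B32]] := bounds.
have [[[O1 O2] O3] O4] := (no_min 1 isT, no_min 2 isT, no_min 3 isT, no_min 4 isT).
by rewrite /not_local_min /= in O1 O2 O3 O4; lia.
Qed.

Lemma profile_ineq (c : nat -> bool) :
  (forall j, 0 < j < 5 -> c j -> vshaped_at j) ->
  (forall j, 0 < j < 5 -> ~~ c j -> not_local_min j) ->
  2 * (b 0 + b 1 + b 2 + b 3) + 2
    <= a 0 + 2 * (a 1 + a 2 + a 3) + a 5 + (c 1 + c 2 + c 3 + c 4).
Proof.
move=> c_vshaped not_c_min.
have [[j hj cj]|no_c] : (exists2 j, 0 < j < 5 & c j) \/ forall j, 0 < j < 5 -> ~~ c j.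
- case: (boolP [exists j : 'I_5, (0 < j) && c j]).
    by case/existsP=> -[j lt_j5] /= /andP[j_gt0 cj]; left; exists j; rewrite ?j_gt0.
  move/existsPn=> no_c.
  by right=> j /andP[j_gt0 lt_j5]; have := no_c (Ordinal lt_j5); rewrite /= j_gt0.
- have := vshaped_profile_ineq hj (c_vshaped j hj cj).
  by case: j hj cj => [|[|[|[|[|[]]]]]] //= _ ->; lia.
have := no_local_min_profile_ineq (fun j hj => not_c_min j hj (no_c j hj)); lia.
Qed.

End Profile.

Section TwoEdgeConnected.
Variable V : finType.
Variable e : rel V.
Hypothesis e_sym : symmetric e.
Implicit Types (h v w x y : V).

Lemma remove_edge_sym x y : symmetric (remove_edge e x y).
Proof.
move=> a b; rewrite /remove_edge e_sym; congr (_ && ~~ _).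
by case: (a == x); case: (b == y); case: (a == y); case: (b == x).
Qed.

Lemma remove_edgeC x y : remove_edge e x y =2 remove_edge e y x.
Proof. by move=> a b; rewrite /remove_edge orbC. Qed.

Lemma nonbridge_sym : symmetric (nonbridge e).
Proof.
move=> x y; rewrite /nonbridge e_sym (eq_connect (remove_edgeC x y)).
by rewrite (sym_connect_sym (remove_edge_sym y x)).
Qed.

Lemma nonbridge_sub_remove_edge x y :
  ~~ nonbridge e x y -> subrel (nonbridge e) (remove_edge e x y).
Proof.
move=> bridge_xy a b nb_ab; rewrite /remove_edge; case/andP: (nb_ab) => -> _ /=.
apply: contraNN bridge_xy => /orP[] /andP[/eqP ax /eqP bx]; subst a b => //.
by rewrite nonbridge_sym.
Qed.

Variable H : {set V}.
Hypothesis H_comp : two_ecc e H.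

Lemma connect_nonbridge_in x y : x \in H -> y \in H -> connect (nonbridge e) x y.
Proof.
case: H_comp => w0 ->; rewrite !inE => Hx; apply: connect_trans.
by rewrite (sym_connect_sym nonbridge_sym).
Qed.

Lemma Tset_self h : h \in Tset e H h.
Proof. by rewrite inE connect0. Qed.

Lemma Tset_notin h v : v \in Tset e H h -> v != h -> v \notin H.
Proof.
rewrite inE => /connectP[p]; elim/last_ind: p => [_ ->|p y _]; first by rewrite eqxx.
rewrite rcons_path last_rcons => /andP[_ /and3P[_ _]] + ->.
by rewrite !inE => /orP[-> //|/eqP ->]; rewrite eqxx.
Qed.

Lemma Tset_step h v w :
  v \in Tset e H h -> e v w -> w \notin H \/ w = h -> w \in Tset e H h.
Proof.
move=> Hv Hvw Hw; move: (Hv); rewrite !inE => /connect_trans; apply; apply: connect1.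
have Hv' : v \in ~: H :|: [set h].
  have [->|neq_vh] := eqVneq v h; first by rewrite !inE eqxx orbT.
  by rewrite !inE (Tset_notin Hv neq_vh).
by rewrite /restrict Hvw Hv' !inE; case: Hw => [->|->]; rewrite ?eqxx ?orbT.
Qed.

(* An edge leaving T(h) at some v <> h would not be a bridge, forcing v into H. *)
Lemma Tset_exit h v w :
  h \in H -> v \in Tset e H h -> e v w -> w \notin Tset e H h -> v = h.
Proof.
move=> Hh Hv Hvw Hw; apply/eqP; apply: contraNT Hw => neq_vh.
have vH := Tset_notin Hv neq_vh.
have [wH|] := boolP (w \in H); last by move=> wH; exact: Tset_step Hv Hvw (or_introl wH).
have [->|neq_wh] := eqVneq w h; first exact: Tset_self.
have nb_vw : nonbridge e v w.
  apply/idPn => bridge_vw; case/negP: (bridge_vw); rewrite /nonbridge Hvw /=.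
  apply: (@connect_trans _ _ h).
    rewrite (sym_connect_sym (remove_edge_sym v w)); move: Hv; rewrite inE.
    apply: connect_sub => a b /and3P[Hab Ha Hb]; apply: connect1.
    have neq_w z : z \in ~: H :|: [set h] -> z != w.
      by apply: contraTneq => ->; rewrite !inE wH (negPf neq_wh).
    by rewrite /remove_edge Hab (negPf (neq_w _ Ha)) (negPf (neq_w _ Hb)) !andbF.
  apply: connect_sub (connect_nonbridge_in Hh wH) => a b nb_ab.
  exact/connect1/(nonbridge_sub_remove_edge bridge_vw).
case/negP: vH; move: wH; case: H_comp => w0 ->; rewrite !inE => /connect_trans; apply.
by apply: connect1; rewrite nonbridge_sym.
Qed.
End TwoEdgeConnected.

Section Relink.
Variable V : finType.
Implicit Types (s : profile V) (x y z : V).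

Lemma edge_sym s : symmetric (edge s).
Proof. by move=> x y; rewrite /edge orbC. Qed.

Definition relink s x y z : profile V := upd s x (z |: (s x :\ y)).

Lemma remove_edge_relink s x y z :
  subrel (remove_edge (edge s) x y) (edge (relink s x y z)).
Proof.
move=> a b /andP[]; rewrite /edge !ffunE => /orP[ab|ba] not_xy; apply/orP; [left|right].
  case: eqP => // ax; rewrite !inE -ax ab andbT; apply/orP; right.
  by apply: contra not_xy => /eqP->; rewrite ax !eqxx.
case: eqP => // bx; rewrite !inE -bx ba andbT; apply/orP; right.
by apply: contra not_xy => /eqP->; rewrite bx !eqxx orbT.
Qed.

Lemma edge_relink s x y z : edge (relink s x y z) x z.
Proof. by rewrite /edge ffunE eqxx !inE eqxx. Qed.

Lemma relink_connected s x y z :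
  connected (edge s) -> edge s z y -> z != x -> connected (edge (relink s x y z)).
Proof.
move=> s_conn zy neq_zx a b; apply: connect_sub (s_conn a b) => {}a {}b ab.
have [rem_ab|] := boolP (remove_edge (edge s) x y a b).
  exact/connect1/remove_edge_relink.
have zy' : edge (relink s x y z) z y.
  apply: remove_edge_relink; rewrite /remove_edge zy (negPf neq_zx) /=.
  by apply/negP => /andP[/eqP zy_eq /eqP yx]; move: neq_zx; rewrite zy_eq yx eqxx.
have xy := connect_trans (connect1 (edge_relink s x y z)) (connect1 zy').
rewrite /remove_edge ab negbK => /orP[] /andP[/eqP-> /eqP->] //.
by rewrite (sym_connect_sym (edge_sym _)).
Qed.

Lemma nash_connected (R : realFieldType) (alpha : R) s :
  nash alpha s -> connected (edge s).
Proof.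
case=> _ stable a b; have not_aT : a \notin [set w | w != a] by rewrite inE eqxx.
have all_a : reaches_all (edge (upd s a [set w | w != a])) a.
  apply/forallP => v; have [->|neq_va] := eqVneq v a; first exact: connect0.
  by apply: connect1; rewrite /edge ffunE eqxx inE neq_va.
by have [/forallP] := stable _ _ not_aT all_a.
Qed.

Lemma nash_relink (R : realFieldType) (alpha : R) s x y z :
  nash alpha s -> y \in s x -> z \notin s x -> z != x ->
  connected (edge (relink s x y z)) ->
  Dsum (edge s) x <= Dsum (edge (relink s x y z)) x.
Proof.
case=> irr stable yx zx neq_zx conn'.
have x_new : x \notin z |: (s x :\ y) by rewrite !inE negb_or eq_sym neq_zx (negPf (irr x)) andbF.
have [_] := stable _ _ x_new (introT forallP (conn' x)).
rewrite /cost ffunE eqxx cardsU1 in_setD1 (negPf zx) andbF (cardsD1 y (s x)) yx /=.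
by rewrite lerD2l ler_nat.
Qed.
End Relink.

Section TwoPath.
Variables (V : finType) (s : profile V) (H : {set V}) (k : nat) (u : nat -> V).
Local Notation e := (edge s).
Hypothesis s_conn : connected e.
Hypothesis H_comp : two_ecc e H.
Hypothesis girth : girth_gt e 14.
Hypothesis k_ge5 : 5 <= k.
Hypothesis u_inj : forall i j, i <= k -> j <= k -> u i = u j -> i = j.
Hypothesis u_in_H : forall i, i <= k -> u i \in H.
Hypothesis u_buys : forall i, i < k -> u i.+1 \in s (u i).
Hypothesis u_deg : forall i, 0 < i < k ->
  indegH s H (u i) = 1 /\ outdegH s H (u i) = 1.

Local Notation d j x := (dist e (u j) x).
Local Notation T j := (Tset e H (u j)).

Let distCs := distC s_conn (@edge_sym _ s).

Lemma path_edge i : i < k -> e (u i) (u i.+1).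
Proof. by move=> lt_ik; rewrite /edge u_buys. Qed.

Lemma path_neq i j : i <= k -> j <= k -> i != j -> u i != u j.
Proof. by move=> hi hj; apply: contraNneq => /(u_inj hi hj)->. Qed.

Lemma inner_in_nbr_eq j v w : 0 < j < k -> v \in H -> w \in H ->
  u j \in s v -> u j \in s w -> v = w.
Proof.
move=> hj vH wH vj wj; have [deg1 _] := u_deg hj.
have /card_le1_eqP eq1 : #|[set v in H | u j \in s v]| <= 1 by move: deg1; rewrite /indegH => ->.
by apply: (eq1 w v); rewrite inE ?vH ?wH ?vj ?wj.
Qed.

Lemma inner_out_nbr_eq j v w : 0 < j < k -> v \in H -> w \in H ->
  v \in s (u j) -> w \in s (u j) -> v = w.
Proof.
move=> hj vH wH jv jw; have [_ deg1] := u_deg hj.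
have /card_le1_eqP eq1 : #|s (u j) :&: H| <= 1 by move: deg1; rewrite /outdegH => ->.
by apply: (eq1 w v); rewrite inE ?vH ?wH ?jv ?jw.
Qed.

Lemma inner_nbr j w : 0 < j < k -> e (u j) w -> w \in H -> w = u j.-1 \/ w = u j.+1.
Proof.
move=> hj jw wH; have /andP[j_gt0 lt_jk] := hj.
case/orP: jw => [jw|wj]; [right|left].
  exact: inner_out_nbr_eq hj wH (u_in_H lt_jk) jw (u_buys lt_jk).
apply: inner_in_nbr_eq hj wH (u_in_H _) wj _; first lia.
by have := u_buys (i := j.-1); rewrite prednK //; apply; lia.
Qed.

Lemma inner_nbr_index j a : 0 < j < k -> a <= k -> e (u j) (u a) -> a = j.-1 \/ a = j.+1.
Proof.
move=> hj ha /inner_nbr-/(_ hj (u_in_H ha))[] /(u_inj ha) eq_a; [left|right]; apply: eq_a; lia.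
Qed.

Lemma dist_path_steps x i : i < k -> d i x <= (d i.+1 x).+1 /\ d i.+1 x <= (d i x).+1.
Proof.
move=> lt_ik; have ii1 := path_edge lt_ik.
by split; apply: dist_adj => //; rewrite edge_sym.
Qed.

Lemma Tset_path_entry m : m <= k ->
  forall a b, e a b -> a \notin T m -> b \in T m -> b = u m.
Proof.
move=> hm a b ab aT bT; have ba : e b a by rewrite edge_sym.
exact: (Tset_exit (@edge_sym _ s) H_comp (u_in_H hm) bT ba aT).
Qed.

Lemma path_notin_Tset m j : m <= k -> j <= k -> j != m -> u j \notin T m.
Proof.
move=> hm hj neq_jm; apply: contraTN (u_in_H hj) => jT.
exact: Tset_notin jT (path_neq hj hm neq_jm).
Qed.

Lemma dist_Tset_in m j x : m <= k -> j <= k -> j != m -> x \in T m ->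
  d j (u m) + d m x <= d j x.
Proof.
move=> hm hj neq_jm xT.
exact: (dist_cut s_conn (Tset_path_entry hm) (path_notin_Tset hm hj neq_jm) xT).
Qed.

Lemma dist_Tset_out j x : 0 < j < k -> x \notin T j -> not_local_min (fun m => d m x) j.
Proof.
move=> hj xT; have /andP[_ /ltnW le_jk] := hj; rewrite /not_local_min !(distCs _ x).
move dk : (dist e x (u j)) => [|m].
  by move/eqP: dk; rewrite (dist_eq0 s_conn) => /eqP xj; rewrite xj Tset_self in xT.
have [w wj dw] := dist_pred s_conn dk.
have [wH|wH] := boolP (w \in H).
  have jw : e (u j) w by rewrite edge_sym.
  by have [<-|<-] := inner_nbr hj jw wH; rewrite dw; [left|right].
have jw : e (u j) w by rewrite edge_sym.
have wT : w \in T j := Tset_step (Tset_self _ _ _) jw (or_introl wH).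
by have := dist_cut s_conn (Tset_path_entry le_jk) xT wT; rewrite dk dw; lia.
Qed.

Lemma path_ends_far : 3 <= d 0 (u 5).
Proof.
(* A shorter u_0 - u_5 path would close a cycle of length 6 or 7 with the path. *)
have E i : i < 5 -> e (u i) (u i.+1) by move=> lt_i5; apply: path_edge; lia.
have no_cycle (c : seq V) : uniq c -> 3 <= size c <= 14 -> ~~ cycle e c.
  by move=> uc hc; apply/negP => cc; apply: (girth hc); exists c.
have p_uniq : uniq [seq u i | i <- iota 0 6].
  by rewrite map_inj_in_uniq ?iota_uniq // => i j; rewrite !mem_iota => hi hj; apply: u_inj; lia.
move dk : (d 0 (u 5)) => [|[|[|//]]].
- by move/eqP: dk; rewrite (dist_eq0 s_conn) (negPf (path_neq _ _ _)) //; lia.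
- have [w w5 /eqP] := dist_pred s_conn dk; rewrite (dist_eq0 s_conn) => /eqP w0.
  case/negP: (no_cycle _ p_uniq isT).
  by rewrite /= (E 0) ?(E 1) ?(E 2) ?(E 3) ?(E 4) // edge_sym w0 w5.
have [w w5 dw] := dist_pred s_conn dk.
have [w' w'w /eqP] := dist_pred s_conn dw; rewrite (dist_eq0 s_conn) => /eqP w'0.
have e0w : e (u 0) w by rewrite w'0.
have w_off : w \notin [seq u i | i <- iota 0 6].
  apply/mapP => -[i]; rewrite mem_iota => /andP[_ lt_i6] wi.
  have [i0|i_gt0] := posnP i; first by move: dw; rewrite wi i0 distxx.
  have [i5|neq_i5] := eqVneq i 5; first by move: dw; rewrite wi i5 dk.
  have hi : 0 < i < k by lia.
  have := inner_nbr_index hi (leq0n k); have := inner_nbr_index hi k_ge5.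
  by rewrite -wi w5 [e w _]edge_sym e0w => /(_ isT) + /(_ isT); lia.
have c_uniq : uniq (rcons [seq u i | i <- iota 0 6] w) by rewrite rcons_uniq w_off.
case/negP: (no_cycle _ c_uniq isT).
by rewrite /= (E 0) ?(E 1) ?(E 2) ?(E 3) ?(E 4) // edge_sym w5 edge_sym e0w.
Qed.

Lemma dist_path_ge m j : 0 < j < 5 -> m <= 5 -> (m - j) + (j - m) <= d m (u j).
Proof.
move=> hj hm.
have steps x : unit_steps (fun i => d i x) by move=> i lt_i5; apply: dist_path_steps; lia.
have no_min a : a \in [:: 0; 5] -> forall i, 0 < i < 5 -> not_local_min (fun i => d i (u a)) i.
  move=> ha i hi; apply: dist_Tset_out; first lia.
  by apply: path_notin_Tset; move: ha; rewrite !inE; lia.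
have d0 : forall i, i <= 4 -> d i (u 0) = i.
  by apply: no_local_min_rise (steps _) (no_min 0 isT) (distxx _ _) _; rewrite distCs path_ends_far.
have d5 : forall i, 0 < i <= 5 -> d i (u 5) = 5 - i.
  exact: no_local_min_fall (steps _) (no_min 5 isT) (distxx _ _) path_ends_far.
have [le_m4|m5] : m <= 4 \/ m = 5 by lia.
  have := dist_triangle s_conn (u 0) (u m) (u j).
  have := dist_triangle s_conn (u 0) (u j) (u m).
  by rewrite !(distCs (u 0)) (distCs (u j) (u m)) !d0 //; lia.
by rewrite m5 distCs d5; lia.
Qed.

Lemma Tset_vshaped j x : 0 < j < 5 -> x \in T j -> vshaped_at (fun m => d m x) j.
Proof.
move=> hj xT m hm /=; have [->|neq_mj] := eqVneq m j; first lia.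
by have := dist_Tset_in _ _ neq_mj xT; have := dist_path_ge hj hm; lia.
Qed.

Lemma path_skip_notin i : i.+2 <= k -> u i.+2 \notin s (u i).
Proof.
move=> hi; apply/negP => skip; have [i0|i_gt0] := posnP i.
  rewrite {}i0 in skip.
  have : u 1 = u 0 by apply: (inner_in_nbr_eq (j := 2)); rewrite ?u_in_H ?u_buys //; lia.
  by apply/eqP; rewrite path_neq //; lia.
have : u i.+1 = u i.+2 by apply: (inner_out_nbr_eq (j := i)); rewrite ?u_in_H ?u_buys //; lia.
by apply/eqP; rewrite path_neq //; lia.
Qed.

Local Notation e' i := (edge (relink s (u i) (u i.+1) (u i.+2))).

Section Relinked.
Variable i : nat.
Hypothesis le_i2k : i.+2 <= k.

Let neq_i_i1 : u i != u i.+1. Proof. by apply: path_neq; lia. Qed.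
Let neq_i2_i : u i.+2 != u i. Proof. by apply: path_neq; lia. Qed.
Let neq_i2_i1 : u i.+2 != u i.+1. Proof. by apply: path_neq; lia. Qed.

Let sub : subrel (remove_edge e (u i) (u i.+1)) (e' i) := @remove_edge_relink _ _ _ _ _.

Let back_edge : e (u i.+2) (u i.+1).
Proof. by rewrite edge_sym path_edge. Qed.

Let skip_edge : e' i (u i.+2) (u i.+1).
Proof. by apply: sub; rewrite /remove_edge back_edge (negPf neq_i2_i) (negPf neq_i2_i1). Qed.

Lemma relink_path_connected : connected (e' i).
Proof. exact: relink_connected s_conn back_edge neq_i2_i. Qed.

Lemma dist_relink_bounds x : let b := dist (e' i) (u i) x in
  [/\ d i x <= d i.+1 x -> b <= d i x,
      d i.+2 x <= d i.+1 x -> b <= (d i.+2 x).+1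
    & d i.+1 x < d i x -> b <= (d i.+1 x).+2].
Proof.
have conn' := relink_path_connected; have new := edge_relink s (u i) (u i.+1) (u i.+2).
split=> le_x.
- exact: (dist_remove_edge s_conn sub neq_i_i1 le_x).
- apply: leq_trans (dist_adj conn' x new) _; rewrite ltnS.
  exact: (dist_remove_edge s_conn sub neq_i2_i1 le_x).
apply: leq_trans (dist_adj conn' x new) _; rewrite ltnS.
apply: leq_trans (dist_adj conn' x skip_edge) _; rewrite ltnS.
have neq_i1_i : u i.+1 != u i by rewrite eq_sym.
have sub' : subrel (remove_edge e (u i.+1) (u i)) (e' i).
  by move=> a b; rewrite remove_edgeC; apply: sub.
exact: (dist_remove_edge s_conn sub' neq_i1_i (ltnW le_x)).
Qed.

End Relinked.

Lemma vertex_profile_ineq x :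
  2 * (dist (e' 0) (u 0) x + dist (e' 1) (u 1) x + dist (e' 2) (u 2) x + dist (e' 3) (u 3) x) + 2
  <= d 0 x + 2 * (d 1 x + d 2 x + d 3 x) + d 5 x
     + ((x \in T 1) + (x \in T 2) + (x \in T 3) + (x \in T 4)).
Proof.
apply: (profile_ineq (a := fun m => d m x) _ (b := fun i => dist (e' i) (u i) x) _
  (c := fun j => x \in T j)).
- by move=> i hi; apply: dist_path_steps; lia.
- by move=> i hi; apply: dist_relink_bounds; lia.
- by move=> j hj xT; apply: Tset_vshaped.
- by move=> j hj xT; apply: dist_Tset_out => //; lia.
Qed.

Variables (R : realFieldType) (alpha : R).
Hypothesis s_nash : nash alpha s.

Lemma Dsum_path_ineq :
  Dsum e (u 0) + 2 * #|V| <= Dsum e (u 5) + (#|T 1| + #|T 2| + #|T 3| + #|T 4|).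
Proof.
have stable i : i < 4 -> Dsum e (u i) <= Dsum (e' i) (u i).
  move=> hi; have le_i2k : i.+2 <= k by lia.
  apply: nash_relink s_nash (u_buys (ltnW le_i2k)) (path_skip_notin le_i2k) _ _.
    by apply: path_neq; lia.
  exact: relink_path_connected.
have card_sum (A : {set V}) : \sum_x (x \in A : nat) = #|A|.
  by rewrite -sum1_card [RHS]big_mkcond; apply: eq_bigr => x _; case: (x \in A).
have : \sum_x _ <= \sum_x _ := leq_sum _ (fun x _ => vertex_profile_ineq x).
have sum2 : \sum_(x : V) 2 = 2 * #|V| by rewrite sum_nat_const mulnC.
rewrite !big_split /= !big1_eq -!DsumE sum2 !card_sum.
have [[[S0 S1] S2] S3] := (stable 0 isT, stable 1 isT, stable 2 isT, stable 3 isT).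
(* the two occurrences of #|V| differ in their coercion path, which lia would miss *)
set N := #|V|; lia.
Qed.

End TwoPath.

Theorem proposition5 (R : realFieldType) (alpha : R) (n : nat)
    (s : profile 'I_n) (H : {set 'I_n}) (k : nat) (u : nat -> 'I_n) :
  (0 < alpha)%R ->
  nash alpha s ->
  two_ecc (edge s) H -> 3 <= #|H| ->
  girth_gt (edge s) 14 ->
  5 <= k ->
  (forall i j, i <= k -> j <= k -> u i = u j -> i = j) ->
  (forall i, i <= k -> u i \in H) ->
  (forall i, i < k -> u i.+1 \in s (u i)) ->
  (forall i, 0 < i < k ->
     indegH s H (u i) = 1 /\ outdegH s H (u i) = 1) ->
  ((Dsum (edge s) (u 5%N))%:Z - (Dsum (edge s) (u 0%N))%:Z >=
   (2 * n)%:Z - (\sum_(1 <= i < 5) #|Tset (edge s) H (u i)|)%:Z)%R.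
Proof.
move=> _ s_nash H_comp _ girth k_ge5 u_inj u_in_H u_buys u_deg.
have := Dsum_path_ineq (nash_connected s_nash) H_comp girth k_ge5 u_inj u_in_H u_buys u_deg s_nash.
rewrite card_ord big_nat_recl // big_nat_recl // big_nat_recl // big_nat_recl // big_geq //.
lia.
Qed.
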